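(* Let $d \geq 0$ be an integer and $t>0$. Let $M$ be a symmetric, unimodal, integer-valued random variable. Then $$\mathbb{E}\left[\log\frac{I_M(t)}{I_{M-d}(t)}\right] \leq \frac{d+d^2}{2t}.$$
   Context: $I_n(t)$ denotes the modified Bessel function of the first kind of integer order $n$ evaluated at $t$ (so $I_{-n}=I_n$). An integer-valued random variable $M$ is symmetric if $\mathbb{P}(M=m)=\mathbb{P}(M=-m)$ for all $m$, and (for symmetric laws) unimodal means that $m \mapsto \mathbb{P}(M=m)$ is non-increasing in $|m|$. *)

From Stdlib Require Import Reals Lra Lia ZArith.
From Coquelicot Require Import Coquelicot.
Open Scope R_scope.

Definition besselI (n : Z) (t : R) : R :=
  Series (fun k : nat =>
    (t / 2) ^ (2 * k + Z.abs_nat n) /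
    (INR (fact k) * INR (fact (k + Z.abs_nat n)))).

(** Used to express sums over the integers (absolute convergence is assumed
    where the value matters, so the grouping is immaterial). *)
Definition zterm (f : Z -> R) (n : nat) : R :=
  match n with
  | O => f 0%Z
  | S _ => f (Z.of_nat n) + f (- Z.of_nat n)%Z
  end.

Definition is_pmf (p : Z -> R) : Prop :=
  (forall m, 0 <= p m) /\ is_series (zterm p) 1.

Definition symmetric_pmf (p : Z -> R) : Prop :=
  forall m, p m = p (- m)%Z.

Definition unimodal_sym_pmf (p : Z -> R) : Prop :=
  forall m n, (Z.abs m <= Z.abs n)%Z -> p n <= p m.

Definition integrable_pmf (p : Z -> R) (g : Z -> R) : Prop :=
  ex_series (zterm (fun m => Rabs (p m * g m))).

Definition expect_pmf (p : Z -> R) (g : Z -> R) : R :=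
  Series (zterm (fun m => p m * g m)).

(** Write a(m) = ln I_|m|(t).  Pairing m with -m, the symmetry of M turns the expectation
    into an average of the second differences 2 a(m) - a(m-d) - a(m+d), so it suffices to
    bound these by (d + d^2)/t.  For every integer z the log-ratio
    r_z = a(z) - a(z+1) satisfies z/t <= sinh r_z <= (z+1)/t: this follows from the recurrence
    I_z - I_(z+2) = 2(z+1)/t I_(z+1) and the Turán inequality I_z I_(z+2) <= I_(z+1)^2, which
    compares the Cauchy products coefficientwise after evaluating them with Vandermonde's
    identity.  As sinh has slope at least 1, r_(z+g) - r_z <= (g+1)/t, and the second
    difference is a sum of d such increments with g = d. *)

From Stdlib Require Import Reals Lra Lia ZArith.
From Coquelicot Require Import Coquelicot.
From mathcomp Require ssreflect ssrbool ssrnat fintype bigop binomial zify.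
Open Scope R_scope.

Module NatBinomial.
Import ssreflect ssrbool ssrnat fintype bigop binomial zify.

Lemma fact_factorial n : fact n = n`!.
Proof. by elim: n => [|n IH] //=; rewrite factS IH. Qed.

Lemma INR_sum_ord (g : nat -> nat) n :
  INR (\sum_(k < n.+1) g k) = sum_f_R0 (fun k => INR (g k)) n.
Proof.
elim: n => [|n IH]; first by rewrite big_ord_recl big_ord0 addn0.
by rewrite big_ord_recr plus_INR IH.
Qed.

Lemma vandermonde_shift a b m :
  (\sum_(k < m.+1) 'C(m, k) * 'C(m + a + b, k + a) = 'C(2 * m + a + b, m + a))%N.
Proof.
rewrite -[RHS]bin_sub; last by lia.
have -> : (2 * m + a + b - (m + a) = m + b)%N by lia.
have -> : (2 * m + a + b = m + (m + a + b))%N by lia.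
rewrite -Vandermonde (big_ord_widen (m + b).+1 (fun k => 'C(m, k) * 'C(m + a + b, k + a))%N);
  last by lia.
rewrite big_mkcond /=; apply: eq_bigr => i _.
have := ltn_ord i; case: ifP => [le_im|gt_im] lt_i.
  rewrite -(bin_sub (n := m + a + b) (m := i + a)); last by lia.
  congr (_ * 'C(_, _))%N; lia.
by rewrite bin_small ?mul0n //; lia.
Qed.

End NatBinomial.

Local Notation fact_R n := (INR (fact n)).

Lemma INR_binomial n k : (k <= n)%nat ->
  INR (binomial.binomial n k) = fact_R n / (fact_R k * fact_R (n - k)).
Proof.
intros le_kn.
assert (E : (binomial.binomial n k * (fact k * fact (n - k)))%nat = fact n).
{ rewrite !NatBinomial.fact_factorial.
  exact (binomial.bin_fact (ssrbool.introT ssrnat.leP le_kn)). }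
rewrite <- E, !mult_INR.
assert (0 < fact_R k) by apply INR_fact_lt_0.
assert (0 < fact_R (n - k)) by apply INR_fact_lt_0.
field; lra.
Qed.

Lemma INR_vandermonde a b m :
  sum_f_R0 (fun k => INR (binomial.binomial m k * binomial.binomial (m + a + b) (k + a))) m
  = INR (binomial.binomial (2 * m + a + b) (m + a)).
Proof.
rewrite <- (NatBinomial.INR_sum_ord
  (fun k => binomial.binomial m k * binomial.binomial (m + a + b) (k + a))%nat).
exact (f_equal INR (NatBinomial.vandermonde_shift a b m)).
Qed.

Lemma Series_le_Series (a b : nat -> R) :
  (forall n, a n <= b n) -> ex_series a -> ex_series b -> Series a <= Series b.
Proof.
intros le_ab ex_a ex_b.
refine (is_lim_seq_le (sum_n a) (sum_n b) (Series a) (Series b) _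
          (Series_correct _ ex_a) (Series_correct _ ex_b)).
intros n; rewrite !sum_n_Reals; apply sum_Rle; intros; apply le_ab.
Qed.

Lemma Series_ge_first (a : nat -> R) :
  (forall n, 0 <= a n) -> ex_series a -> a O <= Series a.
Proof.
intros a_ge0 ex_a.
apply (sum_incr a 0 (Series a)); [|exact a_ge0].
now apply is_series_Reals, Series_correct.
Qed.

Lemma sinh_ln x : 0 < x -> sinh (ln x) = (x - / x) / 2.
Proof. intros x_pos; unfold sinh; now rewrite exp_Ropp, exp_ln. Qed.

Lemma cosh_ge_1 x : 1 <= cosh x.
Proof.
unfold cosh; rewrite exp_Ropp.
assert (0 < exp x) by apply exp_pos.
assert (0 <= (exp x - 1) ^ 2 / exp x) by (apply Rdiv_le_0_compat; [apply pow2_ge_0|lra]).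
replace ((exp x + / exp x) / 2) with (1 + (exp x - 1) ^ 2 / exp x / 2) by (field; lra).
lra.
Qed.

Lemma sub_le_sinh_sub u v : u <= v -> v - u <= sinh v - sinh u.
Proof.
intros le_uv.
destruct (MVT_gen (fun x => sinh x - x) u v (fun x => cosh x - 1)) as [c [_ mvt]].
- intros x _; apply is_derive_Reals, (derivable_pt_lim_minus sinh id).
  + apply derivable_pt_lim_sinh.
  + apply derivable_pt_lim_id.
- intros x _; apply continuity_pt_minus; [apply derivable_continuous_pt, derivable_pt_sinh|].
  apply derivable_continuous_pt, derivable_pt_id.
- assert (H := cosh_ge_1 c).
  assert (0 <= (cosh c - 1) * (v - u)) by (apply Rmult_le_pos; lra).
  lra.
Qed.

Lemma Z_nat_or_m1_or_le_m2 z :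
  (exists n, z = Z.of_nat n) \/ z = (-1)%Z \/ (exists n, z = (- Z.of_nat (n + 2))%Z).
Proof.
destruct (Z_le_gt_dec 0 z) as [z_ge0|z_lt0].
- left; exists (Z.to_nat z); lia.
- destruct (Z.eq_dec z (-1)) as [z_m1|z_ne]; [now right; left|].
  right; right; exists (Z.to_nat (- z - 2)); lia.
Qed.

Definition bessel_term (n : nat) (t : R) (k : nat) : R :=
  (t / 2) ^ (2 * k + n) / (fact_R k * fact_R (k + n)).

Definition besselIn (n : nat) (t : R) : R := Series (bessel_term n t).

Lemma besselI_abs_nat z t : besselI z t = besselIn (Z.abs_nat z) t.
Proof. reflexivity. Qed.

Lemma besselI_opp z t : besselI (- z) t = besselI z t.
Proof. now destruct z. Qed.

Lemma besselI_of_nat n t : besselI (Z.of_nat n) t = besselIn n t.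
Proof. now rewrite besselI_abs_nat, Zabs2Nat.id. Qed.

Definition bessel_mul_coef (a b m : nat) : R :=
  fact_R (2 * m + a + b) / (fact_R m * fact_R (m + a + b) * fact_R (m + a) * fact_R (m + b)).

Lemma sum_inv_fact_vandermonde a b m :
  sum_f_R0 (fun k => / (fact_R k * fact_R (m - k) * fact_R (k + a) * fact_R (m - k + b))) m
  = bessel_mul_coef a b m.
Proof.
assert (Hm : 0 < fact_R m) by apply INR_fact_lt_0.
assert (Hmab : 0 < fact_R (m + a + b)) by apply INR_fact_lt_0.
transitivity (/ (fact_R m * fact_R (m + a + b)) *
  sum_f_R0 (fun k => INR (binomial.binomial m k * binomial.binomial (m + a + b) (k + a))) m).
- rewrite scal_sum; apply sum_eq; intros k le_km.
  assert (0 < fact_R k) by apply INR_fact_lt_0.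
  assert (0 < fact_R (m - k)) by apply INR_fact_lt_0.
  assert (0 < fact_R (k + a)) by apply INR_fact_lt_0.
  assert (0 < fact_R (m - k + b)) by apply INR_fact_lt_0.
  rewrite mult_INR, !INR_binomial by lia.
  replace (m + a + b - (k + a))%nat with (m - k + b)%nat by lia.
  field; repeat split; lra.
- assert (Hma : 0 < fact_R (m + a)) by apply INR_fact_lt_0.
  assert (Hmb : 0 < fact_R (m + b)) by apply INR_fact_lt_0.
  rewrite INR_vandermonde, INR_binomial by lia.
  replace (2 * m + a + b - (m + a))%nat with (m + b)%nat by lia.
  unfold bessel_mul_coef; field; repeat split; lra.
Qed.

Lemma fact_sq_le n : fact_R (n + 1) ^ 2 <= fact_R n * fact_R (n + 2).
Proof.
replace (n + 1)%nat with (S n) by lia; replace (n + 2)%nat with (S (S n)) by lia.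
rewrite !fact_simpl, !mult_INR, !S_INR.
assert (0 < fact_R n) by apply INR_fact_lt_0.
assert (0 <= INR n) by apply pos_INR.
assert (0 <= fact_R n * fact_R n) by nra.
nra.
Qed.

Lemma bessel_mul_coef_pos a b m : 0 < bessel_mul_coef a b m.
Proof.
apply Rdiv_lt_0_compat; [apply INR_fact_lt_0|].
repeat apply Rmult_lt_0_compat; apply INR_fact_lt_0.
Qed.

Lemma bessel_mul_coef_turan n m :
  bessel_mul_coef n (n + 2) m <= bessel_mul_coef (n + 1) (n + 1) m.
Proof.
unfold bessel_mul_coef.
replace (2 * m + n + (n + 2))%nat with (2 * m + (n + 1) + (n + 1))%nat by lia.
replace (m + n + (n + 2))%nat with (m + (n + 1) + (n + 1))%nat by lia.
replace (m + (n + 2))%nat with (m + n + 2)%nat by lia.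
replace (m + (n + 1))%nat with (m + n + 1)%nat by lia.
assert (H := fact_sq_le (m + n)).
unfold Rdiv; apply Rmult_le_compat_l; [apply pos_INR|].
apply Rinv_le_contravar; [repeat apply Rmult_lt_0_compat; apply INR_fact_lt_0|].
rewrite !(Rmult_assoc (fact_R m * _)).
apply Rmult_le_compat_l; [apply Rmult_le_pos; apply pos_INR|nra].
Qed.

Lemma bessel_mul_coef_shift m : bessel_mul_coef 1 1 m <= bessel_mul_coef 0 0 (S m).
Proof.
unfold bessel_mul_coef.
replace (2 * S m + 0 + 0)%nat with (2 * m + 1 + 1)%nat by lia.
replace (S m + 0 + 0)%nat with (m + 1)%nat by lia.
replace (S m + 0)%nat with (m + 1)%nat by lia.
replace (S m) with (m + 1)%nat by lia.
replace (m + 1 + 1)%nat with (m + 2)%nat by lia.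
assert (H := fact_sq_le m).
unfold Rdiv; apply Rmult_le_compat_l; [apply pos_INR|].
apply Rinv_le_contravar; [repeat apply Rmult_lt_0_compat; apply INR_fact_lt_0|].
assert (0 <= fact_R (m + 1) * fact_R (m + 1)) by (apply Rmult_le_pos; apply pos_INR).
nra.
Qed.

Section BesselSeries.

Variable t : R.
Hypothesis t_pos : 0 < t.

Lemma bessel_term_pos n k : 0 < bessel_term n t k.
Proof.
apply Rdiv_lt_0_compat; [apply pow_lt; lra|].
apply Rmult_lt_0_compat; apply INR_fact_lt_0.
Qed.

Lemma ex_series_bessel_term n : ex_series (bessel_term n t).
Proof.
apply (ex_series_le (V := R_CompleteNormedModule) _
         (fun k => (t / 2) ^ n * (((t / 2) ^ 2) ^ k / fact_R k))).
- intros k; change (Rabs (bessel_term n t k) <= (t / 2) ^ n * (((t / 2) ^ 2) ^ k / fact_R k)).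
  rewrite Rabs_pos_eq by (left; apply bessel_term_pos).
  unfold bessel_term; rewrite <- pow_mult, pow_add, (Nat.mul_comm 2 k).
  assert (0 < fact_R k) by apply INR_fact_lt_0.
  assert (1 <= fact_R (k + n)) by (apply (le_INR 1), lt_O_fact).
  assert (0 < (t / 2) ^ (k * 2)) by (apply pow_lt; lra).
  assert (0 < (t / 2) ^ n) by (apply pow_lt; lra).
  assert (0 < / fact_R k) by now apply Rinv_0_lt_compat.
  assert (/ fact_R (k + n) <= 1) by (rewrite <- Rinv_1; apply Rinv_le_contravar; lra).
  unfold Rdiv; rewrite Rinv_mult.
  apply Rle_trans with ((t / 2) ^ (k * 2) * (t / 2) ^ n * (/ fact_R k * 1));
    [|right; unfold Rdiv; ring].
  apply Rmult_le_compat_l; [nra|].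
  apply Rmult_le_compat_l; lra.
- apply (ex_series_scal_l (V := R_NormedModule)).
  exists (exp ((t / 2) ^ 2)).
  generalize (is_exp_Reals ((t / 2) ^ 2)); apply is_series_ext; intros k.
  now rewrite pow_n_pow.
Qed.

Lemma besselIn_pos n : 0 < besselIn n t.
Proof.
apply (Rlt_le_trans _ (bessel_term n t 0)); [apply bessel_term_pos|].
apply Series_ge_first; [|apply ex_series_bessel_term].
intros k; left; apply bessel_term_pos.
Qed.

Lemma bessel_term_recurrence n k :
  bessel_term n t (S k) - bessel_term (n + 2) t k
  = 2 * (INR n + 1) / t * bessel_term (n + 1) t (S k).
Proof.
unfold bessel_term.
replace (2 * S k + n)%nat with (S (S (2 * k + n))) by lia.
replace (2 * k + (n + 2))%nat with (S (S (2 * k + n))) by lia.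
replace (2 * S k + (n + 1))%nat with (S (S (S (2 * k + n)))) by lia.
replace (S k + n)%nat with (S (k + n)) by lia.
replace (k + (n + 2))%nat with (S (S (k + n))) by lia.
replace (S k + (n + 1))%nat with (S (S (k + n))) by lia.
rewrite !fact_simpl, !mult_INR, !S_INR, plus_INR; cbn [pow].
assert (0 < fact_R (k + n)) by apply INR_fact_lt_0.
assert (0 < fact_R k) by apply INR_fact_lt_0.
assert (0 <= INR k) by apply pos_INR.
assert (0 <= INR n) by apply pos_INR.
field; repeat split; lra.
Qed.

Lemma besselIn_recurrence n :
  besselIn n t - besselIn (n + 2) t = 2 * (INR n + 1) / t * besselIn (n + 1) t.
Proof.
unfold besselIn.
rewrite (Series_incr_1 (bessel_term n t)), (Series_incr_1 (bessel_term (n + 1) t))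
  by apply ex_series_bessel_term.
rewrite Rmult_plus_distr_l, <- Series_scal_l.
replace (bessel_term n t 0) with (2 * (INR n + 1) / t * bessel_term (n + 1) t 0).
2:{ unfold bessel_term.
    replace (2 * 0 + n)%nat with n by lia; replace (2 * 0 + (n + 1))%nat with (S n) by lia.
    replace (0 + n)%nat with n by lia; replace (0 + (n + 1))%nat with (S n) by lia.
    rewrite fact_simpl, mult_INR, S_INR; cbn [pow fact INR].
    assert (0 < fact_R n) by apply INR_fact_lt_0.
    assert (0 <= INR n) by apply pos_INR.
    field; repeat split; lra. }
rewrite <- (Series_ext _ _ (bessel_term_recurrence n)), Series_minus.
- ring.
- now apply (ex_series_incr_1 (bessel_term n t)), ex_series_bessel_term.
- apply ex_series_bessel_term.
Qed.

Lemma is_series_besselIn_mul a b :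
  is_series (fun m => (t / 2) ^ (2 * m + a + b) * bessel_mul_coef a b m)
            (besselIn a t * besselIn b t).
Proof.
assert (P := is_series_mult_pos _ _ _ _
  (Series_correct _ (ex_series_bessel_term a)) (Series_correct _ (ex_series_bessel_term b))
  (fun k => Rlt_le _ _ (bessel_term_pos a k)) (fun k => Rlt_le _ _ (bessel_term_pos b k))).
revert P; apply is_series_ext; intros m.
rewrite <- sum_inv_fact_vandermonde, scal_sum.
apply sum_eq; intros k le_km.
unfold bessel_term.
replace (2 * m + a + b)%nat with ((2 * k + a) + (2 * (m - k) + b))%nat by lia.
rewrite (pow_add _ (2 * k + a)).
assert (0 < fact_R k) by apply INR_fact_lt_0.
assert (0 < fact_R (m - k)) by apply INR_fact_lt_0.
assert (0 < fact_R (k + a)) by apply INR_fact_lt_0.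
assert (0 < fact_R (m - k + b)) by apply INR_fact_lt_0.
field; repeat split; lra.
Qed.

Lemma besselIn_turan n : besselIn n t * besselIn (n + 2) t <= besselIn (n + 1) t ^ 2.
Proof.
rewrite <- Rsqr_pow2; unfold Rsqr.
rewrite <- (is_series_unique _ _ (is_series_besselIn_mul n (n + 2))),
        <- (is_series_unique _ _ (is_series_besselIn_mul (n + 1) (n + 1))).
apply Series_le; [intros m; split|eexists; apply is_series_besselIn_mul].
- apply Rmult_le_pos; [apply pow_le; lra|left; apply bessel_mul_coef_pos].
- replace (2 * m + n + (n + 2))%nat with (2 * m + (n + 1) + (n + 1))%nat by lia.
  apply Rmult_le_compat_l; [apply pow_le; lra|apply bessel_mul_coef_turan].
Qed.

(* Turán's inequality at order -1, where I_(-1) = I_1. *)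
Lemma besselIn1_sq_le_besselIn0_sq : besselIn 1 t ^ 2 <= besselIn 0 t ^ 2.
Proof.
rewrite <- !Rsqr_pow2; unfold Rsqr.
rewrite <- (is_series_unique _ _ (is_series_besselIn_mul 1 1)),
        <- (is_series_unique _ _ (is_series_besselIn_mul 0 0)).
set (e := fun m => (t / 2) ^ (2 * m + 0 + 0) * bessel_mul_coef 0 0 m).
assert (e_pos : forall m, 0 <= e m).
{ intros m; apply Rmult_le_pos; [apply pow_le; lra|left; apply bessel_mul_coef_pos]. }
assert (ex_e : ex_series e) by (eexists; apply is_series_besselIn_mul).
rewrite (Series_incr_1 e ex_e).
apply Rle_trans with (Series (fun m => e (S m))); [|specialize (e_pos O); lra].
apply Series_le; [intros m; split|now apply (ex_series_incr_1 e)].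
- apply Rmult_le_pos; [apply pow_le; lra|left; apply bessel_mul_coef_pos].
- unfold e; replace (2 * S m + 0 + 0)%nat with (2 * m + 1 + 1)%nat by lia.
  apply Rmult_le_compat_l; [apply pow_le; lra|apply bessel_mul_coef_shift].
Qed.

End BesselSeries.

Section BesselIntegerOrder.

Variable t : R.
Hypothesis t_pos : 0 < t.

Lemma besselI_pos z : 0 < besselI z t.
Proof. rewrite besselI_abs_nat; now apply besselIn_pos. Qed.

Lemma besselI_recurrence z :
  besselI z t - besselI (z + 2) t = 2 * (IZR z + 1) / t * besselI (z + 1) t.
Proof.
destruct (Z_nat_or_m1_or_le_m2 z) as [[n ->]|[->|[n ->]]].
- replace (Z.of_nat n + 2)%Z with (Z.of_nat (n + 2)) by lia.
  replace (Z.of_nat n + 1)%Z with (Z.of_nat (n + 1)) by lia.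
  rewrite !besselI_of_nat, <- INR_IZR_INZ.
  now apply besselIn_recurrence.
- replace (-1 + 2)%Z with (- -1)%Z by lia.
  rewrite besselI_opp; cbn [IZR IPR]; field; lra.
- replace (- Z.of_nat (n + 2) + 2)%Z with (- Z.of_nat n)%Z by lia.
  replace (- Z.of_nat (n + 2) + 1)%Z with (- Z.of_nat (n + 1))%Z by lia.
  rewrite !besselI_opp, !besselI_of_nat, opp_IZR, <- INR_IZR_INZ, plus_INR.
  assert (R := besselIn_recurrence t t_pos n); simpl (INR 2).
  replace (2 * (- (INR n + 2) + 1) / t * besselIn (n + 1) t)
    with (- (2 * (INR n + 1) / t * besselIn (n + 1) t)) by (field; lra).
  lra.
Qed.

Lemma besselI_turan z : besselI z t * besselI (z + 2) t <= besselI (z + 1) t ^ 2.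
Proof.
destruct (Z_nat_or_m1_or_le_m2 z) as [[n ->]|[->|[n ->]]].
- replace (Z.of_nat n + 2)%Z with (Z.of_nat (n + 2)) by lia.
  replace (Z.of_nat n + 1)%Z with (Z.of_nat (n + 1)) by lia.
  rewrite !besselI_of_nat; now apply besselIn_turan.
- change (besselIn 1 t * besselIn 1 t <= besselIn 0 t ^ 2).
  replace (besselIn 1 t * besselIn 1 t) with (besselIn 1 t ^ 2) by ring.
  exact (besselIn1_sq_le_besselIn0_sq t t_pos).
- replace (- Z.of_nat (n + 2) + 2)%Z with (- Z.of_nat n)%Z by lia.
  replace (- Z.of_nat (n + 2) + 1)%Z with (- Z.of_nat (n + 1))%Z by lia.
  rewrite !besselI_opp, !besselI_of_nat, Rmult_comm.
  now apply besselIn_turan.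
Qed.

Definition besselI_log_ratio z := ln (besselI z t / besselI (z + 1) t).

Lemma sinh_besselI_log_ratio z :
  IZR z / t <= sinh (besselI_log_ratio z) <= (IZR z + 1) / t.
Proof.
set (A := besselI z t); set (B := besselI (z + 1) t).
set (C := besselI (z + 2) t); set (D := besselI (z - 1) t).
assert (A_pos : 0 < A) by apply besselI_pos.
assert (B_pos : 0 < B) by apply besselI_pos.
assert (turan_z : A * C <= B ^ 2) by apply besselI_turan.
assert (turan_z1 : D * B <= A ^ 2).
{ unfold D, B, A; replace (z + 1)%Z with (z - 1 + 2)%Z at 1 by lia.
  replace z with (z - 1 + 1)%Z at 3 by lia; apply besselI_turan. }
assert (up : (IZR z + 1) / t = (A - C) / (2 * B)).
{ assert (R := besselI_recurrence z); fold A B C in R.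
  apply (Rmult_eq_reg_l (2 * B)); [|lra].
  rewrite R; field; lra. }
assert (low : IZR z / t = (D - B) / (2 * A)).
{ assert (R := besselI_recurrence (z - 1)).
  replace (z - 1 + 2)%Z with (z + 1)%Z in R by lia.
  replace (z - 1 + 1)%Z with z in R by lia.
  fold A B D in R; rewrite minus_IZR in R.
  apply (Rmult_eq_reg_l (2 * A)); [|lra].
  rewrite R; field; lra. }
unfold besselI_log_ratio; fold A B.
rewrite sinh_ln by (apply Rdiv_lt_0_compat; assumption).
rewrite up, low; split.
- assert (0 <= (A ^ 2 - D * B) / (2 * A * B)) by (apply Rdiv_le_0_compat; nra).
  replace ((A / B - / (A / B)) / 2) with ((D - B) / (2 * A) + (A ^ 2 - D * B) / (2 * A * B))
    by (field; lra).
  lra.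
- assert (0 <= (B ^ 2 - A * C) / (2 * A * B)) by (apply Rdiv_le_0_compat; nra).
  replace ((A / B - / (A / B)) / 2) with ((A - C) / (2 * B) - (B ^ 2 - A * C) / (2 * A * B))
    by (field; lra).
  lra.
Qed.

Lemma besselI_log_ratio_shift_le z g :
  besselI_log_ratio (z + Z.of_nat g) - besselI_log_ratio z <= (INR g + 1) / t.
Proof.
assert (bound_z := sinh_besselI_log_ratio z).
assert (bound_zg := sinh_besselI_log_ratio (z + Z.of_nat g)).
rewrite plus_IZR, <- INR_IZR_INZ in bound_zg.
assert (0 <= INR g) by apply pos_INR.
destruct (Rle_dec (besselI_log_ratio z) (besselI_log_ratio (z + Z.of_nat g))) as [le_r|gt_r].
- apply sub_le_sinh_sub in le_r.
  replace ((INR g + 1) / t) with ((IZR z + INR g + 1) / t - IZR z / t) by (field; lra).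
  lra.
- assert (0 < (INR g + 1) / t) by (apply Rdiv_lt_0_compat; lra).
  lra.
Qed.

Lemma ln_besselI_sub_succ z : ln (besselI z t) - ln (besselI (z + 1) t) = besselI_log_ratio z.
Proof. unfold besselI_log_ratio; rewrite ln_div; [reflexivity|apply besselI_pos..]. Qed.

Lemma ln_besselI_drop_shift_le k g d :
  (ln (besselI (k + Z.of_nat g) t) - ln (besselI (k + Z.of_nat g + Z.of_nat d) t))
  - (ln (besselI k t) - ln (besselI (k + Z.of_nat d) t))
  <= INR d * (INR g + 1) / t.
Proof.
induction d as [|d IH].
- rewrite !Z.add_0_r; simpl (INR 0); unfold Rdiv; lra.
- assert (step := besselI_log_ratio_shift_le (k + Z.of_nat d) g).
  rewrite <- !ln_besselI_sub_succ in step.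
  replace (k + Z.of_nat d + Z.of_nat g)%Z with (k + Z.of_nat g + Z.of_nat d)%Z in step by lia.
  replace (k + Z.of_nat g + Z.of_nat d + 1)%Z with (k + Z.of_nat g + Z.of_nat (S d))%Z in step
    by lia.
  replace (k + Z.of_nat d + 1)%Z with (k + Z.of_nat (S d))%Z in step by lia.
  rewrite S_INR.
  replace ((INR d + 1) * (INR g + 1) / t) with (INR d * (INR g + 1) / t + (INR g + 1) / t)
    by (field; lra).
  lra.
Qed.

Lemma ln_besselI_second_difference_le n d :
  2 * ln (besselI n t) - ln (besselI (n - Z.of_nat d) t) - ln (besselI (n + Z.of_nat d) t)
  <= (INR d + INR d ^ 2) / t.
Proof.
assert (H := ln_besselI_drop_shift_le (n - Z.of_nat d) d d).
replace (n - Z.of_nat d + Z.of_nat d)%Z with n in H by lia.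
replace ((INR d + INR d ^ 2) / t) with (INR d * (INR d + 1) / t) by (field; lra).
lra.
Qed.

End BesselIntegerOrder.

Lemma expect_pmf_le_of_symmetric (p g : Z -> R) (C : R) :
  is_pmf p -> symmetric_pmf p -> integrable_pmf p g ->
  (forall m, g m + g (- m)%Z <= 2 * C) -> expect_pmf p g <= C.
Proof.
intros [p_ge0 p_sum] p_sym g_int g_pair.
assert (term_le : forall n, zterm (fun m => p m * g m) n <= C * zterm p n).
{ intros [|n]; cbn [zterm].
  - specialize (g_pair 0%Z); specialize (p_ge0 0%Z); simpl (- 0)%Z in g_pair; nra.
  - set (m := Z.of_nat (S n)); rewrite <- (p_sym m).
    specialize (g_pair m); specialize (p_ge0 m); nra. }
assert (ex_pg : ex_series (zterm (fun m => p m * g m))).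
{ refine (ex_series_le (V := R_CompleteNormedModule) _ _ _ g_int).
  intros [|n]; cbn [zterm]; [apply Rle_refl|apply Rabs_triang]. }
unfold expect_pmf.
apply Rle_trans with (Series (fun n => C * zterm p n)).
- apply Series_le_Series; [exact term_le|exact ex_pg|].
  apply (ex_series_scal_l (V := R_NormedModule)); now exists 1.
- rewrite Series_scal_l, (is_series_unique _ _ p_sum); lra.
Qed.

Theorem mainTheorem3 (d : nat) (t : R) (p : Z -> R) :
  0 < t ->
  is_pmf p -> symmetric_pmf p -> unimodal_sym_pmf p ->
  integrable_pmf p (fun m => ln (besselI m t / besselI (m - Z.of_nat d)%Z t)) ->
  expect_pmf p (fun m => ln (besselI m t / besselI (m - Z.of_nat d)%Z t))
    <= (INR d + INR d ^ 2) / (2 * t).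
Proof.
intros t_pos p_pmf p_sym _ integrable.
apply expect_pmf_le_of_symmetric; [assumption..|intros m].
rewrite !ln_div by apply besselI_pos, t_pos.
replace (- m - Z.of_nat d)%Z with (- (m + Z.of_nat d))%Z by lia.
rewrite !besselI_opp.
assert (H := ln_besselI_second_difference_le t t_pos m d).
replace (2 * ((INR d + INR d ^ 2) / (2 * t))) with ((INR d + INR d ^ 2) / t) by (field; lra).
lra.
Qed.
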